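(* Every hereditarily Lindelöf Tychonoff space $X$ which is an $F_{\sigma\delta}$ space has a complete sequence of countable disjoint $F_\sigma$ covers.
   Context: $X$ is an $F_{\sigma\delta}$ space if there is a compactification $cX$ of $X$ (a compact Hausdorff space containing a dense homeomorphic copy of $X$, identified with $X$) such that $X$ is a countable intersection of $F_\sigma$ subsets of $cX$. A filter on $X$ is a nonempty family of subsets of $X$ closed under supersets and finite intersections and not containing $\emptyset$; $x\in X$ is an accumulation point of a filter $\mathcal F$ if every neighborhood of $x$ meets every element of $\mathcal F$. A sequence $(\mathcal F_n)_{n\in\mathbb N}$ of covers of $X$ is complete if every filter on $X$ which contains some element of each $\mathcal F_n$ has an accumulation point in $X$. A cover is countable if it has countably many elements, disjoint if its elements are pairwise disjoint, and $F_\sigma$ if its elements are $F_\sigma$ subsets of $X$. *)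

From HB Require Import structures.
From mathcomp Require Import all_boot all_order all_algebra.
From mathcomp Require Import all_classical all_reals all_analysis.
From mathcomp Require Import Rstruct Rstruct_topology.
Unset Printing Implicit Defensive.
Import Order.TTheory GRing.Theory Num.Theory.
Local Open Scope classical_set_scope.

Definition tychonoff_space (T : topologicalType) : Prop :=
  hausdorff_space T /\
  forall (x : T) (B : set T), closed B -> ~ B x ->
    exists f : T -> Rdefinitions.R,
      continuous f /\ f x = 0%R /\ (forall y, B y -> f y = 1%R).

(* Hereditarily Lindelöf: every subspace A is Lindelöf, i.e. every cover of A
   by open subsets of T (traces of which are the open sets of A) has a
   countable subcover. *)
Definition hereditarily_lindelof (T : topologicalType) : Prop :=
  forall (A : set T) (I : Type) (U : I -> set T),
    (forall i, open (U i)) -> A `<=` \bigcup_i U i ->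
    exists J : set I, countable J /\ A `<=` \bigcup_(i in J) U i.

Definition Fsigma (T : topologicalType) (A : set T) : Prop :=
  exists F : nat -> set T, (forall n, closed (F n)) /\ A = \bigcup_n F n.

Definition embedding (T K : topologicalType) (e : T -> K) : Prop :=
  continuous e /\ injective e /\
  forall U : set T, open U -> exists V : set K, open V /\ e @` U = range e `&` V.

Definition Fsigmadelta_space (T : topologicalType) : Prop :=
  exists (K : topologicalType) (e : T -> K),
    compact [set: K] /\ hausdorff_space K /\ embedding T K e /\ dense (range e) /\
    exists G : nat -> set K, (forall n, Fsigma K (G n)) /\ range e = \bigcap_n G n.

Definition is_filter_on (T : Type) (F : set (set T)) : Prop :=
  F !=set0 /\
  (forall A B, F A -> A `<=` B -> F B) /\
  (forall A B, F A -> F B -> F (A `&` B)) /\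
  ~ F set0.

Definition accumulation_point (T : topologicalType) (F : set (set T)) (x : T) :=
  forall U A, nbhs x U -> F A -> U `&` A !=set0.

Definition is_cover (T : Type) (C : set (set T)) : Prop :=
  \bigcup_(A in C) A = [set: T].

Definition complete_seq (T : topologicalType) (C : nat -> set (set T)) : Prop :=
  forall F : set (set T), is_filter_on T F ->
    (forall n, exists A, C n A /\ F A) ->
    exists x : T, accumulation_point T F x.

Definition countable_disjoint_Fsigma_cover (T : topologicalType)
    (C : set (set T)) : Prop :=
  is_cover T C /\ countable C /\ trivIset C id /\ (forall A, C A -> Fsigma T A).

(* Regularity and hereditary Lindelöfness make every open set of X an
   F_sigma: each point of an open W has an open neighbourhood whose closure
   lies in W, and countably many of these cover W.  Write X = \bigcap_n G_n
   in a compactification cX with G_n = \bigcup_m P_{n,m}, P_{n,m} closed.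
   For each n the closed sets X \cap P_{n,m} cover X; disjointifying them
   gives pieces of the form closed \cap open, hence F_sigma.  A filter that
   contains a piece of every cover contains, for each n, a subset of some
   P_{n,m_n}; a cluster point in cX of its image lies in every P_{n,m_n},
   hence in \bigcap_n G_n = X, and is then an accumulation point of the
   filter in X. *)

From mathcomp Require Import all_boot all_order all_algebra.
From mathcomp Require Import all_classical all_reals all_analysis.
From mathcomp Require Import Rstruct_topology lra.
Import Order.TTheory.
Local Open Scope classical_set_scope.

Lemma tychonoff_regular {T : topologicalType} :
  tychonoff_space T -> regular_space T.
Proof.
move=> [_ tych] a U /=; rewrite nbhsE => -[W [oW Wa] WU].
have [f [cf [fa0 f1]]] := tych a (~` W) (open_closedC oW) (fun nWa => nWa Wa).
pose lt_half := f @^-1` [set r | (r < 1/2)%R].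
pose le_half := f @^-1` [set r | (r <= 1/2)%R].
exists lt_half.
  exists lt_half => //; split; last by rewrite /lt_half /= fa0; lra.
  by apply: (proj1 (continuousP _) cf); exact: open_lt.
have /closure_id le_halfE : closed le_half.
  by apply: (proj1 (continuous_closedP _) cf); exact: closed_le.
have : closure lt_half `<=` closure le_half by apply: closureS => y /= /ltW.
rewrite -le_halfE => /subset_trans; apply => y; rewrite /le_half /= => fy.
apply: WU.
by apply: contrapT => nWy; move: fy; rewrite f1 //; lra.
Qed.

Lemma Fsigma_bigcup_countable {T : topologicalType} {I : Type} (J : set I)
    (C : I -> set T) :
  countable J -> (forall i, J i -> closed (C i)) ->
  Fsigma T (\bigcup_(i in J) C i).
Proof.
(* A countable index set is empty or the range of a sequence. *)
move=> /pfcard_geP[->|/surjfunPex[f ->]] cC.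
  by exists (fun=> set0); split; [move=> _; exact: closed0|rewrite !bigcup0].
exists (C \o f); split; last by rewrite bigcup_image.
by move=> n; apply: cC; exists n.
Qed.

Lemma hereditarily_lindelof_open_Fsigma {T : topologicalType} :
  hereditarily_lindelof T -> regular_space T ->
  forall W : set T, open W -> Fsigma T W.
Proof.
move=> hlT regT W oW.
have /choice[U HU] : forall x, exists U : set T,
    open U /\ closure U `<=` W /\ (W x -> U x).
  move=> x; have [Wx|nWx] := pselect (W x); last first.
    by exists set0; rewrite closure0; split; [exact: open0|split].
  have [V Vx VW] := regT x W (open_nbhs_nbhs (conj oW Wx)).
  exists V°; split; first exact: open_interior.
  split; last by move=> _; exact: nbhs_singleton (nbhs_interior Vx).
  exact: subset_trans (closureS (@interior_subset _ V)) VW.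
have WU : W `<=` \bigcup_x U x.
  by move=> x Wx; exists x => //; exact: (HU x).2.2.
have [J [cJ WJ]] := hlT W T U (fun x => (HU x).1) WU.
suff -> : W = \bigcup_(x in J) closure (U x).
  by apply: Fsigma_bigcup_countable => // x _; exact: closed_closure.
apply/seteqP; split => [y /WJ [x Jx Uxy]|y [x _ clUxy]].
  by exists x => //; exact: subset_closure.
exact: (HU x).2.1.
Qed.

Lemma closedI_Fsigma {T : topologicalType} (A B : set T) :
  closed A -> Fsigma T B -> Fsigma T (A `&` B).
Proof.
move=> cA [F [cF ->]]; exists (fun n => A `&` F n).
by split; [move=> n; exact: closedI|exact: setI_bigcupr].
Qed.

Lemma seqDU_Fsigma {T : topologicalType} (P : nat -> set T) :
  (forall W : set T, open W -> Fsigma T W) -> (forall n, closed (P n)) ->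
  forall n, Fsigma T (seqDU P n).
Proof.
move=> openF cP n; rewrite /seqDU setDE; apply: closedI_Fsigma => //.
by apply/openF/closed_openC/closed_bigsetU => k _; exact: cP.
Qed.

Lemma seqDU_countable_disjoint_Fsigma_cover {T : topologicalType}
    (P : nat -> set T) :
  (forall W : set T, open W -> Fsigma T W) -> (forall n, closed (P n)) ->
  \bigcup_n P n = [set: T] ->
  countable_disjoint_Fsigma_cover T (range (seqDU P)).
Proof.
move=> openF cP PT; split; [|split; [|split]].
- by rewrite /is_cover -PT seqDU_bigcup_eq (bigcup_image _ _ id).
- exact: card_le_trans (card_image_le _ _) (countableP _).
- exact/trivIset_image/trivIset_seqDU.
- by move=> _ [n _ <-]; exact: seqDU_Fsigma.
Qed.

Lemma is_filter_on_proper {T : Type} (F : set (set T)) :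
  is_filter_on T F -> ProperFilter F.
Proof.
move=> [[A FA] [FS [FI F0]]]; apply: Build_ProperFilter => //.
apply: Build_Filter => // [|B B' BB' FB]; first exact: FS FA _.
exact: FS FB BB'.
Qed.

Lemma closed_cluster_sub {T : topologicalType} (F : set (set T)) (B : set T) :
  closed B -> F B -> cluster F `<=` B.
Proof.
by rewrite clusterE => /closure_id BE FB p clp; rewrite BE; exact: clp.
Qed.

Lemma embedding_cluster_accumulation {X K : topologicalType} (e : X -> K)
    (F : set (set X)) (x : X) :
  embedding X K e -> Filter F -> cluster (fmap e F) (e x) ->
  accumulation_point X F x.
Proof.
move=> [_ [inj_e emb]] FF clx U A; rewrite nbhsE => -[W [oW Wx] WU] FA.
have [V [oV eWE]] := emb W oW.
have [_ Vex] : (range e `&` V) (e x) by rewrite -eWE; exists x.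
have eFA : F (e @^-1` (e @` A)) by apply: (filterS _ FA) => a Aa; exists a.
have [_ [[a Aa <-] Vea]] := clx _ _ eFA (open_nbhs_nbhs (conj oV Vex)).
have : (range e `&` V) (e a) by split => //; exists a.
rewrite -eWE => -[b Wb /inj_e ba].
by exists a; split => //; apply: WU; rewrite -ba.
Qed.

Lemma complete_seq_of_compactification {X K : topologicalType} {e : X -> K}
    {P : nat -> nat -> set K} {C : nat -> set (set X)} :
  compact [set: K] -> embedding X K e -> (forall n m, closed (P n m)) ->
  \bigcap_n \bigcup_m P n m `<=` range e ->
  (forall n A, C n A -> exists m, A `<=` e @^-1` P n m) -> complete_seq X C.
Proof.
move=> cK emb cP PE CP F /is_filter_on_proper PF FC.
have [p [_ clp]] := cK (fmap e F) _ filterT.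
suff [x _ exp] : range e p.
  by exists x; apply: embedding_cluster_accumulation emb _ _; rewrite exp.
apply: PE => n _; have [A [CA FA]] := FC n; have [m Am] := CP n A CA.
exists m => //; apply: closed_cluster_sub clp; first exact: cP.
exact: filterS Am FA.
Qed.

Theorem lemma4p8 (X : topologicalType) :
  tychonoff_space X -> hereditarily_lindelof X -> Fsigmadelta_space X ->
  exists C : nat -> set (set X),
    (forall n, countable_disjoint_Fsigma_cover X (C n)) /\ complete_seq X C.
Proof.
move=> tX hX [K [e [cK [_ [emb [_ [G [GF eG]]]]]]]].
have openF := hereditarily_lindelof_open_Fsigma hX (tychonoff_regular tX).
have /choice[P PG] : forall n, exists P : nat -> set K,
  (forall m, closed (P m)) /\ G n = \bigcup_m P m := GF.
have cP n m : closed (P n m) by exact: (PG n).1.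
have GP n : G n = \bigcup_m P n m by exact: (PG n).2.
pose Q n m := e @^-1` P n m.
exists (fun n => range (seqDU (Q n))); split.
- move=> n; apply: seqDU_countable_disjoint_Fsigma_cover => // [m|].
    exact: (continuous_closedP _).1 emb.1 _ (cP n m).
  apply/seteqP; split => // x _.
  have : (\bigcap_k G k) (e x) by rewrite -eG; exists x.
  by move/(_ n I); rewrite GP => -[m _ Pm]; exists m.
- apply: (complete_seq_of_compactification cK emb cP) => [k Pk|n _ [m _ <-]].
    by rewrite eG => n _; rewrite GP; exact: Pk.
  by exists m; exact: subset_seqDU.
Qed.
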